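(* Let $G$ be a finite multigraph without self-loops and let $G'$ be obtained from $G$ by a single channel-preserving move. Then $|\mathcal{C}(G)|=|\mathcal{C}(G')|$. If moreover $G$ is bipartite, then $|\mathcal{C}_B(G)|=|\mathcal{C}_B(G')|$ and $|\mathcal{C}_W(G)|=|\mathcal{C}_W(G')|$.
   Context: Multiple edges are allowed. For a vertex $v$, $N(v)$ is the multiset of neighbours of $v$, each neighbour appearing with multiplicity equal to the number of edges joining it to $v$; for a vertex set $C$, $|N(v)\cap C|$ counts elements of $N(v)$ lying in $C$ with multiplicity. A channel is a vertex set $C$ with $|N(v)\cap C|$ even for every vertex $v$ (empty set included); $\mathcal{C}(G)$ is the set of channels, and for bipartite $G$, $\mathcal{C}_B(G)$ and $\mathcal{C}_W(G)$ are the sets of channels consisting only of black, resp. only of white, vertices. The channel-preserving moves are: (VC) 2-valent vertex contraction: for a vertex $v$ of degree $2$ adjacent to two distinct vertices $v_1,v_2$, contract both edges at $v$ (merging $v,v_1,v_2$ into one vertex) and delete any resulting self-loops; (ED) doubled edge deletion: delete two edges having the same pair of endpoints; (FV) forced vertex pair removal: for distinct adjacent vertices $v_1,v_2$ with $\deg v_1=1$, delete $v_1,v_2$ and all edges incident to them. In the bipartite case, the merged vertex in (VC) receives the common color of $v_1,v_2$. *)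

From HB Require Import structures.
From mathcomp Require Import all_boot.
Set Implicit Arguments. Unset Strict Implicit. Unset Printing Implicit Defensive.

(* A finite multigraph: a finite vertex type and an edge-multiplicity
   function; [color] is the black(true)/white(false) colouring used only
   in the bipartite part of the statement. *)
Record mgraph := MGraph {
  vert : finType;
  mult : vert -> vert -> nat;
  color : vert -> bool }.

Definition wf (G : mgraph) : Prop :=
  (forall x y : vert G, mult x y = mult y x) /\ (forall x : vert G, mult x x = 0).

Definition bipartite (G : mgraph) : Prop :=
  forall x y : vert G, 0 < mult x y -> color x != color y.

Definition deg (G : mgraph) (v : vert G) : nat := \sum_(u : vert G) mult v u.

Definition nbr_count (G : mgraph) (v : vert G) (C : {set vert G}) : nat :=
  \sum_(u in C) mult v u.

Definition channel (G : mgraph) (C : {set vert G}) : bool :=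
  [forall v, ~~ odd (nbr_count v C)].

Definition channels (G : mgraph) : {set {set vert G}} := [set C | channel C].
Definition bchannels (G : mgraph) : {set {set vert G}} :=
  [set C | channel C & C \subset [set x | color x]].
Definition wchannels (G : mgraph) : {set {set vert G}} :=
  [set C | channel C & C \subset [set x | ~~ color x]].

Definition ED_graph (G : mgraph) (u w : vert G) : mgraph :=
  MGraph (fun x y => if ((x == u) && (y == w)) || ((x == w) && (y == u))
                     then mult x y - 2 else mult x y) (@color G).

Definition FV_vert (G : mgraph) (v1 v2 : vert G) : finType :=
  {x : vert G | (x != v1) && (x != v2)}.
Definition FV_graph (G : mgraph) (v1 v2 : vert G) : mgraph :=
  @MGraph (FV_vert v1 v2) (fun x y => mult (val x) (val y)) (fun x => color (val x)).

(* (VC): merge v, v1, v2 into one vertex, represented by v1;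
   the new vertex set is V \ {v, v2}.  The multiplicity between two distinct
   new vertices is the number of edges between the corresponding classes;
   self-loops are deleted.  The merged vertex gets the colour of v1. *)
Definition VC_vert (G : mgraph) (v v2 : vert G) : finType :=
  {x : vert G | (x != v) && (x != v2)}.
Definition VC_class (G : mgraph) (v v1 v2 z : vert G) : {set vert G} :=
  if z == v1 then [set v; v1; v2] else [set z].
Definition VC_graph (G : mgraph) (v v1 v2 : vert G) : mgraph :=
  @MGraph (VC_vert v v2)
    (fun x y => if x == y then 0 else
       \sum_(a in VC_class v v1 v2 (val x)) \sum_(b in VC_class v v1 v2 (val y)) mult a b)
    (fun x => color (val x)).

Inductive move : mgraph -> mgraph -> Prop :=
  | move_VC (G : mgraph) (v v1 v2 : vert G) :
      v1 != v2 -> deg v = 2 -> 0 < mult v v1 -> 0 < mult v v2 ->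
      move G (VC_graph v v1 v2)
  | move_ED (G : mgraph) (u w : vert G) :
      u != w -> 2 <= mult u w -> move G (ED_graph u w)
  | move_FV (G : mgraph) (v1 v2 : vert G) :
      v1 != v2 -> deg v1 = 1 -> 0 < mult v1 v2 -> move G (FV_graph v1 v2).

From HB Require Import structures.
From mathcomp Require Import all_boot.
Set Implicit Arguments. Unset Strict Implicit. Unset Printing Implicit Defensive.

(* Each move induces a bijection between channels of G and of G'.  (ED)
   changes no parity.  (FV) The pendant vertex v1 forces v2 out of every
   channel, and whether v1 is in is then dictated by the parity at v2, so a
   channel is determined by its restriction to G - v1 - v2.  (VC) G' is the
   quotient of G collapsing {v, v1, v2}; edges inside a block count twice, so
   the parity at a vertex of G' is the parity of the block sum of the counts
   in G.  The degree-2 vertex v forces v1 and v2 to be in or out together and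
   contributes evenly to every block sum; whether v is in is again dictated
   by the parity at v1.  In both lifts the added vertex is forced to have the
   colour of an existing member, which gives the bipartite counts. *)

Lemma card_in_bij (T1 T2 : finType) (A : {set T1}) (B : {set T2})
    (f : T1 -> T2) (g : T2 -> T1) :
  {in A, forall x, f x \in B} -> {in B, forall y, g y \in A} ->
  {in A, cancel f g} -> {in B, cancel g f} -> #|A| = #|B|.
Proof.
move=> fA gB fK gK.
have injf : {in A &, injective f}.
  by move=> x y xA yA e; rewrite -(fK x xA) -(fK y yA) e.
rewrite -(card_in_imset injf); apply: eq_card => y.
apply/imsetP/idP=> [[x xA ->]|yB]; first exact: fA.
by exists (g y); rewrite ?gB ?gK.
Qed.

Lemma odd_sum (T : finType) (P : pred T) (F : T -> nat) :
  odd (\sum_(i | P i) F i) = \big[addb/false]_(i | P i) odd (F i).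
Proof. exact: (big_morph odd oddD). Qed.

Definition monochrome (G : mgraph) (c : bool) (S : {set vert G}) : bool :=
  S \subset [set x | color x == c].

Lemma bchannelsE (G : mgraph) :
  bchannels G = [set C | channel C & monochrome true C].
Proof.
apply/setP=> C; rewrite !inE; congr (_ && _); apply: eq_subset_r => x.
by rewrite !inE; case: (color x).
Qed.

Lemma wchannelsE (G : mgraph) :
  wchannels G = [set C | channel C & monochrome false C].
Proof.
apply/setP=> C; rewrite !inE; congr (_ && _); apply: eq_subset_r => x.
by rewrite !inE; case: (color x).
Qed.

Lemma monochrome_imset (G H : mgraph) (h : vert H -> vert G) c (S : {set vert H}) :
  (forall y, color (h y) = color y) -> monochrome c S -> monochrome c (h @: S).
Proof.
move=> hcol /subsetP Sc; apply/subsetP=> _ /imsetP[y yS ->].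
by rewrite inE hcol; have := Sc y yS; rewrite inE.
Qed.

Lemma monochrome_preimset (G H : mgraph) (h : vert H -> vert G) c (S : {set vert G}) :
  (forall y, color (h y) = color y) -> monochrome c S -> monochrome c (h @^-1: S).
Proof.
move=> hcol /subsetP Sc; apply/subsetP=> y; rewrite !inE -hcol => /Sc.
by rewrite inE.
Qed.

Definition equinumerous_channels (G G' : mgraph) : Prop :=
  #|channels G| = #|channels G'| /\
  (bipartite G ->
     #|bchannels G| = #|bchannels G'| /\ #|wchannels G| = #|wchannels G'|).

Lemma channel_bij_equinumerous (G G' : mgraph)
    (f : {set vert G} -> {set vert G'}) (g : {set vert G'} -> {set vert G}) :
  (forall C, channel C -> channel (f C)) ->
  (forall C', channel C' -> channel (g C')) ->
  (forall C, channel C -> g (f C) = C) -> (forall C', f (g C') = C') ->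
  (forall c C, monochrome c C -> monochrome c (f C)) ->
  (bipartite G -> forall c C', monochrome c C' -> monochrome c (g C')) ->
  equinumerous_channels G G'.
Proof.
move=> fch gch fK gK fmono gmono; split.
  by apply: (card_in_bij (f := f) (g := g)) => C; rewrite !inE; auto.
move=> bipG; rewrite !bchannelsE !wchannelsE.
by split; apply: (card_in_bij (f := f) (g := g)) => C;
  rewrite !inE => /andP[chC monoC]; rewrite ?fch ?gch ?fmono ?gmono ?fK ?gK.
Qed.

Section Counting.
Variable G : mgraph.
Implicit Types (a b x z : vert G) (S : {set vert G}).

Lemma setD1_notin z S : z \notin S -> S :\ z = S.
Proof. by move=> zS; apply/setDidPl; rewrite disjoint_sym disjoints1. Qed.

Lemma channel_even x S : channel S -> ~~ odd (nbr_count x S).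
Proof. by move/forallP. Qed.

Lemma nbr_count_setU1 x z S :
  z \notin S -> nbr_count x (z |: S) = mult x z + nbr_count x S.
Proof. by move=> zS; rewrite /nbr_count big_setU1. Qed.

Lemma nbr_count_setD1 x z S :
  nbr_count x S = (z \in S) * mult x z + nbr_count x (S :\ z).
Proof.
case: (boolP (z \in S)) => [zS | /setD1_notin -> //].
by rewrite mul1n -nbr_count_setU1 ?setD11 // setD1K.
Qed.

Lemma adj_of_odd_nbr_count x S :
  odd (nbr_count x S) -> exists2 u, u \in S & 0 < mult x u.
Proof.
move=> oddS; apply/exists_inP; apply: contraLR oddS.
rewrite negb_exists_in => /forall_inP mult0.
by rewrite /nbr_count big1 // => u /mult0; case: (mult x u).
Qed.

Lemma odd_sum_nbr_count_setD1 (P : pred (vert G)) z S :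
  ~~ odd (\sum_(a | P a) mult a z) ->
  odd (\sum_(a | P a) nbr_count a S) = odd (\sum_(a | P a) nbr_count a (S :\ z)).
Proof.
move=> evenz; under eq_bigr do rewrite (nbr_count_setD1 _ z S).
by rewrite big_split -big_distrr /= oddD oddM (negbTE evenz) andbF.
Qed.

Definition fix_parity a b S : {set vert G} :=
  let S0 := S :\ a in if odd (nbr_count b S0) then a |: S0 else S0.

Lemma eq_fix_parity a b S S' :
  S :\ a = S' :\ a -> fix_parity a b S = fix_parity a b S'.
Proof. by rewrite /fix_parity => ->. Qed.

Lemma mem_fix_parity a b S z : z != a -> (z \in fix_parity a b S) = (z \in S).
Proof.
move=> za; rewrite /fix_parity /=.
by case: ifP; rewrite ?in_setU1 in_setD1 za ?(negbTE za).
Qed.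

Lemma fix_parity_setD1 a b S : fix_parity a b S :\ a = S :\ a.
Proof.
apply/setP=> z; rewrite !in_setD1; case: eqVneq => //= za.
exact: mem_fix_parity.
Qed.

Lemma nbr_count_fix_parity a b S x :
  nbr_count x (fix_parity a b S) =
    odd (nbr_count b (S :\ a)) * mult x a + nbr_count x (S :\ a).
Proof.
by rewrite /fix_parity /=; case: ifP; rewrite ?nbr_count_setU1 ?setD11 ?mul1n.
Qed.

Section SingleEdge.
Variables a b : vert G.
Hypothesis mba : mult b a = 1.

Lemma fix_parity_even S : ~~ odd (nbr_count b (fix_parity a b S)).
Proof. by rewrite nbr_count_fix_parity mba muln1 oddD oddb addbb. Qed.

Lemma fix_parity_id S : ~~ odd (nbr_count b S) -> fix_parity a b S = S.
Proof.
rewrite (nbr_count_setD1 b a) mba muln1 oddD /fix_parity.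
case: (boolP (a \in S)) => [aS|/setD1_notin ->] /=.
  by rewrite negbK => ->; rewrite setD1K.
by move=> /negbTE ->.
Qed.

End SingleEdge.

Lemma monochrome_fix_parity a b c S :
  bipartite G -> 0 < mult b a -> monochrome c (S :\ a) ->
  monochrome c (fix_parity a b S).
Proof.
move=> bipG mba monoS; rewrite /fix_parity; case: ifP => // /adj_of_odd_nbr_count[u uS mbu].
apply/subsetP=> z; rewrite in_setU1 => /predU1P[->|]; last exact: (subsetP monoS).
have := subsetP monoS u uS; rewrite !inE => /eqP <-.
by move: (bipG _ _ mba) (bipG _ _ mbu); case: (color a); case: (color b); case: (color u).
Qed.

Lemma even_sum_mult_set (K : {set vert G}) :
  wf G -> ~~ odd (\sum_(a in K) \sum_(b in K) mult a b).
Proof.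
move=> [msym mdiag]; have [n] := ubnP #|K|; elim: n K => // n IHn K.
case: (set_0Vmem K) => [-> _|[a aK]]; first by rewrite big_set0.
rewrite -(setD1K aK) cardsU1 setD11 ltnS => /IHn IHK.
have aK' : a \notin K :\ a by rewrite setD11.
rewrite big_setU1 //= big_setU1 //= mdiag add0n.
rewrite [X in _ + X](eq_bigr (fun c => mult a c + \sum_(b in K :\ a) mult c b)).
  by rewrite big_split /= !oddD addbA addbb.
by move=> c _; rewrite big_setU1 //= msym.
Qed.

End Counting.

Section Quotient.
Variables (G : mgraph) (T : finType) (q : vert G -> T).
Hypothesis wfG : wf G.

Definition quot_mult (x y : T) : nat :=
  if x == y then 0 else \sum_(a | q a == x) \sum_(b | q b == y) mult a b.

Lemma odd_quot_count x (C : {set T}) :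
  odd (\sum_(y in C) quot_mult x y) =
  odd (\sum_(a | q a == x) nbr_count a (q @^-1: C)).
Proof.
have even_block y : ~~ odd (\sum_(a | q a == y) \sum_(b | q b == y) mult a b).
  have := even_sum_mult_set [set a | q a == y] wfG.
  by rewrite (eq_bigl _ _ (in_set _)); under eq_bigr do rewrite (eq_bigl _ _ (in_set _)).
have -> : \sum_(a | q a == x) nbr_count a (q @^-1: C) =
          \sum_(y in C) \sum_(a | q a == x) \sum_(b | q b == y) mult a b.
  rewrite [RHS]exchange_big; apply: eq_bigr => a _.
  rewrite /nbr_count (partition_big q (mem C)) => [|b]; last by rewrite inE.
  apply: eq_bigr => y yC; apply: eq_bigl => b.
  by rewrite inE; case: (q b =P y) => [->|_]; rewrite ?andbT ?andbF.
rewrite !odd_sum; apply: eq_bigr => y _; rewrite /quot_mult.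
by case: (x =P y) => [<-|//]; rewrite (negbTE (even_block x)).
Qed.

End Quotient.

Section VertexContraction.
Variables (G : mgraph) (v v1 v2 : vert G).
Hypotheses (wfG : wf G) (v12 : v1 != v2) (degv : deg v = 2)
  (mvv1 : 0 < mult v v1) (mvv2 : 0 < mult v v2).

Let G' := VC_graph v v1 v2.

Lemma VC_msym (x y : vert G) : mult x y = mult y x. Proof. by case: wfG. Qed.
Lemma VC_mdiag (x : vert G) : mult x x = 0. Proof. by case: wfG. Qed.

Lemma VC_neq_v1 : v != v1.
Proof. by apply: contraTneq mvv1 => ->; rewrite VC_mdiag. Qed.
Lemma VC_neq_v2 : v != v2.
Proof. by apply: contraTneq mvv2 => ->; rewrite VC_mdiag. Qed.

Lemma VC_nbrs : [/\ mult v v1 = 1, mult v v2 = 1 &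
  forall x, x != v1 -> x != v2 -> mult v x = 0].
Proof.
have := degv; rewrite /deg (bigD1 v1) //= (bigD1 v2) //= ?(eq_sym v2) //.
move: mvv1 mvv2; case: (mult v v1) => [//|[|n]]; case: (mult v v2) => [//|[|k]] // _ _;
  rewrite ?addSn ?addnS //.
rewrite !add0n => -[] /eqP; rewrite sum_nat_eq0 => /forall_inP mult0.
by split=> // x xv1 xv2; apply/eqP; apply: mult0; rewrite xv1 xv2.
Qed.

Lemma nbr_count_v S : nbr_count v S = (v1 \in S) + (v2 \in S).
Proof.
have [e1 e2 e0] := VC_nbrs.
rewrite /nbr_count big_mkcond (bigD1 v1) //= (bigD1 v2) ?(eq_sym v2) //= big1.
  by rewrite e1 e2 addn0; case: (v1 \in S); case: (v2 \in S).
by move=> x /andP[xv1 xv2]; rewrite e0 ?if_same.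
Qed.

Lemma VC_vert_v1 : (v1 != v) && (v1 != v2).
Proof. by rewrite eq_sym VC_neq_v1 v12. Qed.

Definition VC_merged : vert G' := Sub v1 VC_vert_v1.

(* Sends v and v2, which are not vertices of G', to the merged vertex. *)
Definition VC_proj : vert G -> vert G' := insubd VC_merged.

Lemma val_VC_proj z : val (VC_proj z) = if (z != v) && (z != v2) then z else v1.
Proof. exact: val_insubd. Qed.

Lemma VC_projK (y : vert G') : VC_proj (val y) = y.
Proof. exact: valKd. Qed.

Lemma mem_VC_class (b : vert G) (y : vert G') :
  (b \in VC_class v v1 v2 (val y)) = (VC_proj b == y).
Proof.
rewrite -(inj_eq val_inj) val_VC_proj /VC_class.
case/andP: (valP y) => yv yv2; case: ifP => [/eqP-> | yv1].
  rewrite !inE; case: (eqVneq b v) => [->|_] /=; rewrite ?eqxx //.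
  by case: (eqVneq b v2) => [->|_] /=; rewrite ?eqxx ?orbT ?orbF.
rewrite inE; case: (eqVneq b v) => [->|_] /=.
  by rewrite eq_sym (negbTE yv) eq_sym yv1.
by case: (eqVneq b v2) => [->|_] //=; rewrite eq_sym (negbTE yv2) eq_sym yv1.
Qed.

Lemma sum_VC_class z (F : vert G -> nat) :
  \sum_(b in VC_class v v1 v2 z) F b = if z == v1 then F v + F v1 + F v2 else F z.
Proof.
rewrite /VC_class; case: ifP => _; last by rewrite big_set1.
have -> : [set v; v1; v2] = v |: (v1 |: [set v2]) by apply/setP=> t; rewrite !inE orbA.
rewrite big_setU1 /=; last by rewrite !inE negb_or VC_neq_v1 VC_neq_v2.
by rewrite big_setU1 /= ?big_set1 ?addnA // inE.
Qed.

Lemma odd_VC_count (x : vert G') (C' : {set vert G'}) :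
  odd (nbr_count x C') =
  odd (\sum_(a in VC_class v v1 v2 (val x)) nbr_count a (VC_proj @^-1: C')).
Proof.
have -> : nbr_count x C' = \sum_(y in C') quot_mult VC_proj x y.
  apply: eq_bigr => y _ /=; rewrite /quot_mult; case: eqP => // _.
  apply: eq_big => [a|a _]; first exact: mem_VC_class.
  by apply: eq_bigl => b; rewrite mem_VC_class.
by rewrite odd_quot_count //; congr odd; apply: eq_bigl => a; rewrite mem_VC_class.
Qed.

Lemma odd_VC_class_count_setD1 (x : vert G') S :
  odd (\sum_(a in VC_class v v1 v2 (val x)) nbr_count a S) =
  odd (\sum_(a in VC_class v v1 v2 (val x)) nbr_count a (S :\ v)).
Proof.
apply: odd_sum_nbr_count_setD1; rewrite sum_VC_class !(VC_msym _ v) VC_mdiag.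
have [e1 e2 e0] := VC_nbrs; case: ifP => [_|xv1]; first by rewrite e1 e2.
by case/andP: (valP x) => _ xv2; rewrite e0 ?xv1.
Qed.

Lemma channel_v1_v2 C : channel C -> (v1 \in C) = (v2 \in C).
Proof.
by move/(channel_even v); rewrite nbr_count_v; case: (v1 \in C); case: (v2 \in C).
Qed.

Lemma preimset_VC_proj_restrict C :
  channel C -> VC_proj @^-1: (val @^-1: C) :\ v = C :\ v.
Proof.
move=> chC; apply/setP=> z; rewrite !inE val_VC_proj.
case: (eqVneq z v) => //= _; case: (eqVneq z v2) => [->|] //=.
by rewrite channel_v1_v2.
Qed.

Lemma VC_restrict_channel C : channel C -> channel (G := G') (val @^-1: C).
Proof.
move=> chC; apply/forallP=> x.
rewrite odd_VC_count odd_VC_class_count_setD1 preimset_VC_proj_restrict //.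
rewrite -odd_VC_class_count_setD1 odd_sum big1 // => a _.
exact/negbTE/channel_even.
Qed.

Definition VC_lift (C' : {set vert G'}) : {set vert G} :=
  fix_parity v v1 (VC_proj @^-1: C').

Lemma VC_lift_channel C' : channel C' -> channel (VC_lift C').
Proof.
move=> chC'; set S := VC_lift C'.
have class_even (x : vert G') :
    ~~ odd (\sum_(a in VC_class v v1 v2 (val x)) nbr_count a S).
  rewrite odd_VC_class_count_setD1 fix_parity_setD1 -odd_VC_class_count_setD1.
  by rewrite -odd_VC_count channel_even.
have [e1 e2 _] := VC_nbrs.
have even_v : ~~ odd (nbr_count v S).
  rewrite nbr_count_v !mem_fix_parity ?(eq_sym _ v) ?VC_neq_v1 ?VC_neq_v2 // !inE.
  have /eqP : val (VC_proj v1) = val (VC_proj v2).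
    by rewrite !val_VC_proj eqxx andbF if_same.
  by rewrite (inj_eq val_inj) => /eqP ->; case: (_ \in C').
have even_v1 : ~~ odd (nbr_count v1 S) by apply: fix_parity_even; rewrite VC_msym.
apply/forallP=> z.
case: (eqVneq z v) => [-> //|zv]; case: (eqVneq z v1) => [-> //|zv1].
have := class_even (VC_proj z); rewrite sum_VC_class val_VC_proj zv.
case: (eqVneq z v2) => [->|_] /=; last by rewrite (negbTE zv1).
by rewrite eqxx !oddD (negbTE even_v) (negbTE even_v1).
Qed.

Lemma VC_restrict_lift C' : val @^-1: VC_lift C' = C'.
Proof.
apply/setP=> y; case/andP: (valP y) => yv _.
by rewrite !inE mem_fix_parity // inE VC_projK.
Qed.

Lemma VC_lift_restrict C : channel C -> VC_lift (val @^-1: C) = C.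
Proof.
move=> chC; rewrite /VC_lift (eq_fix_parity _ (preimset_VC_proj_restrict chC)).
by apply: fix_parity_id; [rewrite VC_msym; case: VC_nbrs | exact: channel_even].
Qed.

Lemma color_VC_proj z : bipartite G -> z != v -> color (val (VC_proj z)) = color z.
Proof.
move=> bipG zv; rewrite val_VC_proj zv; case: (eqVneq z v2) => [->|_] //=.
by move: (bipG _ _ mvv1) (bipG _ _ mvv2); case: (color v); case: (color v1); case: (color v2).
Qed.

Lemma VC_lift_monochrome c C' :
  bipartite G -> monochrome (G := G') c C' -> monochrome c (VC_lift C').
Proof.
move=> bipG /subsetP monoC'; apply: monochrome_fix_parity => //; first by rewrite VC_msym.
apply/subsetP=> z; rewrite !inE => /andP[zv /monoC'].
by rewrite inE /= color_VC_proj.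
Qed.

Lemma VC_equinumerous : equinumerous_channels G G'.
Proof.
apply: (@channel_bij_equinumerous G G' (fun C => val @^-1: C) VC_lift).
- exact: VC_restrict_channel.
- exact: VC_lift_channel.
- exact: VC_lift_restrict.
- exact: VC_restrict_lift.
- by move=> c C; apply: monochrome_preimset.
- by move=> bipG c C'; apply: VC_lift_monochrome.
Qed.

End VertexContraction.

Section PendantRemoval.
Variables (G : mgraph) (v1 v2 : vert G).
Hypotheses (wfG : wf G) (v12 : v1 != v2) (degv1 : deg v1 = 1) (mv12 : 0 < mult v1 v2).

Let G' := FV_graph v1 v2.

Lemma FV_nbrs : mult v1 v2 = 1 /\ forall x, x != v2 -> mult v1 x = 0.
Proof.
have := degv1; rewrite /deg (bigD1 v2) //=.
move: mv12; case: (mult v1 v2) => [//|[|n]] _; last by rewrite addSn.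
move=> /eqP; rewrite add1n eqSS sum_nat_eq0 => /forall_inP mult0.
by split=> // x xv2; apply/eqP; apply: mult0.
Qed.

Lemma FV_mult_v1 x : x != v2 -> mult x v1 = 0.
Proof. by case: wfG => msym _ xv2; rewrite msym; apply: (proj2 FV_nbrs). Qed.

Lemma nbr_count_v1 S : nbr_count v1 S = (v2 \in S).
Proof.
have [e2 e0] := FV_nbrs; rewrite /nbr_count big_mkcond (bigD1 v2) //= big1.
  by rewrite e2 addn0; case: (v2 \in S).
by move=> x xv2; rewrite e0 ?if_same.
Qed.

Lemma FV_imset_val (C' : {set vert G'}) z : z \in val @: C' -> (z != v1) && (z != v2).
Proof. by case/imsetP=> y _ ->; apply: (valP y). Qed.

Lemma FV_nbr_count (y : vert G') C' : nbr_count y C' = nbr_count (val y) (val @: C').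
Proof. by rewrite /nbr_count big_imset //= => x z _ _; apply: val_inj. Qed.

Lemma channel_notin_v2 C : channel C -> v2 \notin C.
Proof. by move/(channel_even v1); rewrite nbr_count_v1 oddb. Qed.

Lemma imset_val_restrict C : channel C -> val @: (val @^-1: C : {set vert G'}) = C :\ v1.
Proof.
move=> chC; apply/setP=> z; rewrite in_setD1; apply/imsetP/idP=> [[y yC ->]|].
  by case/andP: (valP y) => -> _; rewrite inE in yC.
case/andP=> zv1 zC; have zv2 : z != v2 by apply: contraNneq (channel_notin_v2 chC) => <-.
have Pz : (z != v1) && (z != v2) by rewrite zv1 zv2.
by exists (Sub z Pz : vert G'); rewrite ?inE.
Qed.

Lemma FV_restrict_channel C : channel C -> channel (G := G') (val @^-1: C).
Proof.
move=> chC; apply/forallP=> y; rewrite FV_nbr_count imset_val_restrict //.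
have := channel_even (val y) chC; rewrite (nbr_count_setD1 _ v1) FV_mult_v1 ?muln0 //.
by case/andP: (valP y).
Qed.

Definition FV_lift (C' : {set vert G'}) : {set vert G} := fix_parity v1 v2 (val @: C').

Lemma FV_lift_channel C' : channel C' -> channel (FV_lift C').
Proof.
move=> chC'; have v1_notin : v1 \notin val @: C'.
  by apply/negP=> /FV_imset_val; rewrite eqxx.
apply/forallP=> z; case: (eqVneq z v1) => [->|zv1].
  rewrite nbr_count_v1 mem_fix_parity 1?eq_sym // oddb.
  by apply/negP=> /FV_imset_val; rewrite eqxx andbF.
case: (eqVneq z v2) => [->|zv2].
  by apply: fix_parity_even; rewrite (proj1 wfG); case: FV_nbrs.
rewrite nbr_count_fix_parity FV_mult_v1 // muln0 add0n setD1_notin //.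
have Pz : (z != v1) && (z != v2) by rewrite zv1 zv2.
by rewrite -[z]/(val (Sub z Pz : vert G')) -FV_nbr_count channel_even.
Qed.

Lemma FV_restrict_lift C' : val @^-1: FV_lift C' = C'.
Proof.
apply/setP=> y; case/andP: (valP y) => yv1 _.
by rewrite !inE mem_fix_parity // (mem_imset _ _ val_inj).
Qed.

Lemma FV_lift_restrict C : channel C -> FV_lift (val @^-1: C) = C.
Proof.
move=> chC; rewrite /FV_lift imset_val_restrict //.
rewrite (@eq_fix_parity _ _ _ _ C); last by rewrite setDDl setUid.
by apply: fix_parity_id; [rewrite (proj1 wfG); case: FV_nbrs | exact: channel_even].
Qed.

Lemma FV_lift_monochrome c C' :
  bipartite G -> monochrome (G := G') c C' -> monochrome c (FV_lift C').
Proof.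
move=> bipG monoC'; apply: monochrome_fix_parity => //; first by rewrite (proj1 wfG).
rewrite setD1_notin; last by apply/negP=> /FV_imset_val; rewrite eqxx.
exact: (monochrome_imset (H := G')).
Qed.

Lemma FV_equinumerous : equinumerous_channels G G'.
Proof.
apply: (@channel_bij_equinumerous G G' (fun C => val @^-1: C) FV_lift).
- exact: FV_restrict_channel.
- exact: FV_lift_channel.
- exact: FV_lift_restrict.
- exact: FV_restrict_lift.
- by move=> c C; apply: monochrome_preimset.
- by move=> bipG c C'; apply: FV_lift_monochrome.
Qed.

End PendantRemoval.

Lemma channel_ED_graph (G : mgraph) (u w : vert G) (C : {set vert G}) :
  wf G -> 2 <= mult u w -> channel (G := ED_graph u w) C = channel C.
Proof.
move=> [msym _] muw; apply: eq_forallb => x; congr (~~ _).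
rewrite /nbr_count !odd_sum; apply: eq_bigr => y _ /=.
case: ifP => // /orP[] /andP[/eqP -> /eqP ->]; last rewrite msym;
  by rewrite -{2}(subnK muw) oddD addbF.
Qed.

Lemma ED_equinumerous (G : mgraph) (u w : vert G) :
  wf G -> 2 <= mult u w -> equinumerous_channels G (ED_graph u w).
Proof.
move=> wfG muw; have chE := channel_ED_graph _ wfG muw.
by apply: (@channel_bij_equinumerous G (ED_graph u w) id id) => // C; rewrite chE.
Qed.

Theorem lemma6p2 (G G' : mgraph) :
  wf G -> move G G' ->
  #|channels G| = #|channels G'| /\
  (bipartite G ->
     #|bchannels G| = #|bchannels G'| /\ #|wchannels G| = #|wchannels G'|).
Proof.
move=> + mv; case: mv => [{}G v v1 v2 v12 degv mvv1 mvv2 | {}G u w _ muw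
                          | {}G v1 v2 v12 degv1 mv12] wfG.
- exact: VC_equinumerous.
- exact: ED_equinumerous.
- exact: FV_equinumerous.
Qed.
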